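(* Let $\mathcal{C}$ be a translation based cipher over $V=(\mathbb{F}_2)^{mn}$ with a proper round $h$, and let $\gamma=\gamma_h$ be the bricklayer transformation of round $h$. Suppose that for some integer $r$ with $1<r<m$, each brick $\gamma_i$ of $\gamma$ is (i) differentially $2^r$-uniform and (ii) strongly $(r-1)$-anti-invariant. Then $\Gamma_h(\mathcal{C})$ is a primitive permutation group on $V$, and hence so is $\Gamma_\infty(\mathcal{C})$.
   Context: Permutations act on the right. Let $m,n>1$ and $V=V_1\oplus\dots\oplus V_n$ with each $V_i\cong(\mathbb{F}_2)^m$. For $v\in V$, $\sigma_v$ is the translation $x\mapsto x+v$. A bricklayer transformation is a permutation $\gamma$ of $V$ with permutations (''bricks'') $\gamma_i$ of $V_i$ such that $(v_1+\dots+v_n)\gamma=v_1\gamma_1+\dots+v_n\gamma_n$. A wall is a nontrivial proper subspace of $V$ that is a sum of some $V_i$; $\lambda\in\mathrm{GL}(V)$ is a proper mixing layer if no wall is $\lambda$-invariant. A tb cipher $\mathcal{C}=\{\tau_k:k\in\mathcal{K}\}$ has $\tau_k=\tau_{k,1}\cdots\tau_{k,l}$ with $\tau_{k,h}=\gamma_h\lambda_h\sigma_{\phi(k,h)}$, $\gamma_h$ a key-independent bricklayer transformation with $0\gamma_h=0$, $\lambda_h\in\mathrm{GL}(V)$ key-independent, $\phi:\mathcal{K}\times\{1,\dots,l\}\to V$; a round $h$ is proper if $\lambda_h$ is a proper mixing layer and $k\mapsto\phi(k,h)$ is onto $V$, and a tb cipher has at least one proper round. $\Gamma_h(\mathcal{C})=\langle\tau_{k,h}:k\in\mathcal{K}\rangle$,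 $\Gamma_\infty(\mathcal{C})=\langle\Gamma_1(\mathcal{C}),\dots,\Gamma_l(\mathcal{C})\rangle$. For $f:(\mathbb{F}_2)^m\to(\mathbb{F}_2)^m$ and $u\in(\mathbb{F}_2)^m$, $\hat f_u(x)=f(x+u)+f(x)$. $f$ is differentially $\delta$-uniform if $|\{x:\hat f_u(x)=v\}|\le\delta$ for all $u\ne0$ and all $v$. For $1\le s<m$, $f$ is strongly $s$-anti-invariant if for any two subspaces $U,W$ of $(\mathbb{F}_2)^m$ with $f(U)=W$, either $\dim U=\dim W<m-s$ or $U=W=(\mathbb{F}_2)^m$. *)

From HB Require Import structures.
From mathcomp Require Import all_boot all_order all_algebra all_fingroup all_solvable.
Set Implicit Arguments. Unset Strict Implicit. Unset Printing Implicit Defensive.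
Import GRing.Theory.
Local Open Scope ring_scope.

(* The state space V = V_1 (+) ... (+) V_n with V_i = (F_2)^m is represented
   as the space of n x m matrices over F_2: row i of x is the V_i-component. *)
Notation brick m := 'rV['F_2]_m.
Notation state n m := 'M['F_2]_(n, m).

Definition transl n m (v : state n m) : {perm state n m} := perm (addIr v).

Definition is_bricklayer n m (gam : {perm state n m}) (b : 'I_n -> {perm brick m}) :=
  forall (x : state n m) (i : 'I_n), row i (gam x) = b i (row i x).

Definition is_GL n m (lam : {perm state n m}) :=
  forall (a : 'F_2) (x y : state n m), lam (a *: x + y) = a *: lam x + lam y.

Definition wall n m (I : {set 'I_n}) : {set state n m} :=
  [set x | [forall i, (i \notin I) ==> (row i x == 0)]].

Definition proper_mixing n m (lam : {perm state n m}) :=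
  is_GL lam /\
  forall I : {set 'I_n}, I != set0 -> I != setT ->
    ~ (forall x, x \in wall m I -> lam x \in wall m I).

Definition diff_uniform m (f : brick m -> brick m) (delta : nat) :=
  forall u v : brick m, u != 0 ->
    (#|[set x : brick m | (f (x + u) + f x == v)%R]| <= delta)%N.

Definition strongly_anti_invariant m (f : brick m -> brick m) (s : nat) :=
  forall U W : {vspace brick m},
    f @: [set x : brick m | x \in U] = [set x : brick m | x \in W] ->
    ((\dim U = \dim W) /\ (\dim U < m - s)%N) \/ (U = fullv /\ W = fullv).

(* The round function tau_{k,h} = gamma_h lambda_h sigma_{phi(k,h)};
   permutations act on the right, and mathcomp's product (s * t) x = t (s x)
   matches this convention. *)
Definition round_fun n m (K : finType) (l : nat)
  (gam lam : 'I_l -> {perm state n m}) (phi : K -> 'I_l -> state n m)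
  (k : K) (h : 'I_l) : {perm state n m} :=
  (gam h * lam h * transl (phi k h))%g.

Definition Gamma_h n m (K : finType) (l : nat)
  (gam lam : 'I_l -> {perm state n m}) (phi : K -> 'I_l -> state n m)
  (h : 'I_l) : {set {perm state n m}} :=
  <<[set round_fun gam lam phi k h | k : K]>>%g.

Definition Gamma_inf n m (K : finType) (l : nat)
  (gam lam : 'I_l -> {perm state n m}) (phi : K -> 'I_l -> state n m)
  : {set {perm state n m}} :=
  <<\bigcup_(h : 'I_l) Gamma_h gam lam phi h>>%g.

Definition proper_round n m (K : finType) (l : nat)
  (lam : 'I_l -> {perm state n m}) (phi : K -> 'I_l -> state n m) (h : 'I_l) :=
  proper_mixing (lam h) /\ (forall v : state n m, exists k, phi k h = v).

From HB Require Import structures.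
From mathcomp Require Import all_boot all_order all_algebra all_fingroup all_solvable.
From mathcomp Require Import finfield zify.
Set Implicit Arguments. Unset Strict Implicit. Unset Printing Implicit Defensive.
Import GRing.Theory.
Local Open Scope ring_scope.

(* Each round function of round h is gamma lambda followed by a translation and
   k |-> phi(k, h) is onto, so Gamma_h contains gamma lambda and every translation.
   A block system of a group containing all translations is the coset partition of
   a subgroup X of V, and gamma lambda must map cosets of X to cosets of X.  For a
   brick V_i put U_i = X \cap V_i; its image under gamma_i is W_i = X lambda^-1 \cap V_i.
   If some vector of X has a nonzero i-th component, differential 2^r-uniformity of
   gamma_i first makes U_i nonzero and then gives W_i more than 2^(m-r) elements;
   strong (r-1)-anti-invariance then forces U_i = V_i.  So X is a sum of bricks
   invariant under lambda, and as lambda is a proper mixing layer, X = 0 or X = V: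
   the block system is trivial. *)


Lemma F2_cases (c : 'F_2) : c = 0 \/ c = 1.
Proof. by case: c => [[|[|k]]] //= Hc; [left|right]; apply: val_inj. Qed.

Lemma addmx_F2 a b (x : 'M['F_2]_(a, b)) : x + x = 0.
Proof. by apply/matrixP => i j; rewrite !mxE addrr_pchar2 // pchar_Fp. Qed.

Lemma oppmx_F2 a b (x : 'M['F_2]_(a, b)) : - x = x.
Proof. by apply/esym/eqP; rewrite -addr_eq0 addmx_F2. Qed.

Lemma addmxK_F2 a b (x y : 'M['F_2]_(a, b)) : x + y + y = x.
Proof. by rewrite -addrA addmx_F2 addr0. Qed.

Lemma card_diff_range m r (f : brick m -> brick m) (u : brick m) (T : {set brick m}) :
  diff_uniform f (2 ^ r) -> (r <= m)%N -> u != 0 ->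
  (forall a, f (a + u) + f a \in T) -> (2 ^ (m - r) <= #|T|)%N.
Proof.
move=> fdu le_rm u0 fT.
rewrite -(leq_pmul2l (expn_gt0 2 r)) -expnD subnKC //.
have <- : #|{: brick m}| = (2 ^ m)%N by rewrite card_mx card_Fp // mul1n.
apply: (@leq_trans (\sum_(t in T) 2 ^ r)); last by rewrite sum_nat_const mulnC.
rewrite -sum1_card (partition_big (fun a => f (a + u) + f a) (mem T)) //=.
apply: leq_sum => t _; rewrite sum1_card.
apply: leq_trans (fdu u t u0).
by apply: subset_leq_card; apply/subsetP => x; rewrite !inE.
Qed.

Lemma span_addr_closed m (S : {set brick m}) :
  0 \in S -> {in S &, forall x y, x + y \in S} ->
  [set x | x \in <<enum S>>%VS] = S.
Proof.
move=> S0 SD; apply/setP => x; rewrite inE.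
apply/idP/idP => Sx; last by apply: memv_span; rewrite mem_enum.
rewrite (coord_span (X := in_tuple (enum S)) Sx).
apply: (big_ind (fun y => y \in S)) => //= i _.
have : (in_tuple (enum S))`_i \in enum S by apply: (mem_nth 0 (ltn_ord i)).
rewrite mem_enum.
by case: (F2_cases (coord (in_tuple (enum S)) i x)) => ->; rewrite ?scale0r ?scale1r.
Qed.

Lemma card_addr_closed m (S : {set brick m}) :
  0 \in S -> {in S &, forall x y, x + y \in S} ->
  #|S| = (2 ^ \dim <<enum S>>%VS)%N.
Proof.
by move=> S0 SD; rewrite -{1}(span_addr_closed S0 SD) cardsE card_vspace card_Fp.
Qed.

Lemma GL_add n m (lam : {perm state n m}) x y : is_GL lam -> lam (x + y) = lam x + lam y.
Proof. by move/(_ 1 x y); rewrite !scale1r. Qed.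

Lemma GL0 n m (lam : {perm state n m}) : is_GL lam -> lam 0 = 0.
Proof. by move=> lamGL; apply: (addrI (lam 0)); rewrite -GL_add // !addr0. Qed.

Lemma transl_apply n m (v x : state n m) : transl v x = x + v.
Proof. by rewrite permE. Qed.

Lemma transl0 n m : transl (0 : state n m) = 1%g.
Proof. by apply/permP => x; rewrite transl_apply perm1 addr0. Qed.

Section Bricklayer.

Variables (n m : nat) (gam : {perm state n m}) (b : 'I_n -> {perm brick m}).
Hypothesis gam_bricks : is_bricklayer gam b.
Hypothesis gam0 : gam 0 = 0.

Definition embed (i : 'I_n) (a : brick m) : state n m :=
  \matrix_j (if j == i then a else 0).

Lemma row_embed i a j : row j (embed i a) = if j == i then a else 0.
Proof. exact: rowK. Qed.

Lemma embed0 i : embed i 0 = 0.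
Proof. by apply/row_matrixP => j; rewrite row_embed row0; case: ifP. Qed.

Lemma embedD i a c : embed i (a + c) = embed i a + embed i c.
Proof.
by apply/row_matrixP => j; rewrite linearD /= !row_embed; case: ifP; rewrite ?addr0.
Qed.

Lemma sum_embed_row (x : state n m) : \sum_i embed i (row i x) = x.
Proof.
apply/row_matrixP => j; rewrite raddf_sum (bigD1 j) //= big1 ?addr0.
  by rewrite row_embed eqxx.
by move=> i; rewrite row_embed eq_sym => /negbTE ->.
Qed.

Lemma brick0 i : b i 0 = 0.
Proof. by have := gam_bricks 0 i; rewrite gam0 !row0. Qed.

Lemma gam_embed i a : gam (embed i a) = embed i (b i a).
Proof.
apply/row_matrixP => j; rewrite gam_bricks !row_embed.
by case: eqP => [->|]; rewrite ?brick0.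
Qed.

Lemma bricklayer_wall I x : (gam x \in wall m I) = (x \in wall m I).
Proof.
rewrite !inE; apply: eq_forallb => i.
by rewrite gam_bricks -[X in _ == X](brick0 i) (inj_eq perm_inj).
Qed.

End Bricklayer.

Section BlockOfRound.

Variables (n m r : nat) (gam lam : {perm state n m}) (b : 'I_n -> {perm brick m}).
Hypothesis gam_bricks : is_bricklayer gam b.
Hypothesis gam0 : gam 0 = 0.
Hypothesis lam_mixing : proper_mixing lam.
Hypothesis r_bounds : (0 < r < m)%N.
Hypothesis b_uniform : forall i, diff_uniform (b i) (2 ^ r).
Hypothesis b_anti : forall i, strongly_anti_invariant (b i) (r - 1).

Let lamGL : is_GL lam := lam_mixing.1.
Let r_lt_m : (r < m)%N. Proof. by case/andP: r_bounds. Qed.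

Variable X : {set state n m}.
Hypothesis X0 : 0 \in X.
Hypothesis XD : {in X &, forall x y, x + y \in X}.
(* In characteristic 2, [x + y \in X] says that x and y lie in the same coset of X. *)
Hypothesis X_cosets : forall x y, x + y \in X -> lam (gam x) + lam (gam y) \in X.

Lemma block_stable x : x \in X -> lam (gam x) \in X.
Proof. by move=> Xx; have := @X_cosets x 0; rewrite gam0 GL0 // !addr0; apply. Qed.

Lemma block_onto y : y \in X -> exists2 x, x \in X & lam (gam x) = y.
Proof.
move=> Xy; have img : [set lam (gam x) | x in X] = X.
  apply/eqP; rewrite eqEcard card_imset; last by move=> x1 x2 /perm_inj/perm_inj.
  by rewrite leqnn andbT; apply/subsetP => _ /imsetP[x Xx ->]; apply: block_stable.
by move: Xy; rewrite -{1}img => /imsetP[x Xx ->]; exists x.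
Qed.

Let U i := [set a | embed i a \in X].
Let W i := [set a | lam (embed i a) \in X].

Let U0 i : 0 \in U i. Proof. by rewrite inE embed0. Qed.
Let W0 i : 0 \in W i. Proof. by rewrite inE embed0 GL0. Qed.
Let UD i : {in U i &, forall a c, a + c \in U i}.
Proof. by move=> a c; rewrite !inE embedD; apply: XD. Qed.
Let WD i : {in W i &, forall a c, a + c \in W i}.
Proof. by move=> a c; rewrite !inE embedD GL_add //; apply: XD. Qed.

Lemma brick_U_W i a : a \in U i -> b i a \in W i.
Proof. by rewrite !inE -(gam_embed gam_bricks gam0); apply: block_stable. Qed.

Lemma brick_onto_W i c : c \in W i -> exists2 a, a \in U i & b i a = c.
Proof.
rewrite inE => /block_onto[x Xx /perm_inj gx].
have x_embed : x = embed i (row i x).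
  apply/row_matrixP => j; rewrite row_embed; case: eqP => [-> // | /eqP ji].
  apply: (@perm_inj _ (b j)).
  by rewrite -gam_bricks gx row_embed (negbTE ji) (brick0 gam_bricks gam0).
exists (row i x); first by rewrite inE -x_embed.
by rewrite -gam_bricks gx row_embed eqxx.
Qed.

Lemma brick_derivative_W i u a :
  u \in X -> b i (a + row i u) + b i a + b i (row i u) \in W i.
Proof.
move=> Xu; rewrite inE.
have -> : embed i (b i (a + row i u) + b i a + b i (row i u))
        = gam (embed i a + u) + gam (embed i a) + gam u.
  apply/row_matrixP => j; rewrite row_embed !linearD /= !gam_bricks !linearD /= !row_embed.
  by case: eqP => [-> // | _]; rewrite add0r (brick0 gam_bricks gam0) addr0 addmx_F2.
rewrite !(@GL_add _ _ lam) //; apply: XD; last exact: block_stable.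
by apply: X_cosets; rewrite addrAC addmx_F2 add0r.
Qed.

Lemma U_neq0 i u : u \in X -> row i u != 0 -> exists2 a, a \in U i & a != 0.
Proof.
move=> Xu ui0.
have [c Wc c0] : exists2 c, c \in W i & c != 0.
  apply/exists_inP; apply: contraT; rewrite negb_exists_in => /forall_inP W_0.
  suff : (2 ^ (m - r) <= 1)%N by have := ltn_expl (m - r) (ltnSn 1); lia.
  have := card_diff_range (T := [set b i (row i u)]) (b_uniform i) (ltnW r_lt_m) ui0.
  rewrite cards1; apply => a.
  have /W_0 := brick_derivative_W i a Xu.
  by rewrite negbK addr_eq0 oppmx_F2 inE.
have [a Ua bac] := brick_onto_W Wc.
by exists a => //; apply: contraNneq c0 => a0; rewrite -bac a0 (brick0 gam_bricks gam0).
Qed.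

Lemma U_full i a : a \in U i -> a != 0 -> U i = setT.
Proof.
move=> Ua a0.
have card_W : (2 ^ (m - r) < #|W i|)%N.
  rewrite (cardsD1 0 (W i)) W0 add1n ltnS.
  apply: (card_diff_range (b_uniform i) (ltnW r_lt_m) a0) => x.
  rewrite in_setD1 addr_eq0 oppmx_F2 (inj_eq perm_inj) -{2}[x]addr0 (inj_eq (addrI x)) a0 /=.
  rewrite -(addmxK_F2 (b i (x + a) + b i x) (b i a)); apply: WD (brick_U_W Ua).
  have Xa : embed i a \in X by rewrite inE in Ua.
  by have := brick_derivative_W i x Xa; rewrite row_embed eqxx.
have img : b i @: [set x | x \in <<enum (U i)>>%VS] = [set x | x \in <<enum (W i)>>%VS].
  rewrite !span_addr_closed //.
  apply/setP => c; apply/imsetP/idP => [[x Ux ->] | Wc]; first exact: brick_U_W.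
  by have [x Ux <-] := brick_onto_W Wc; exists x.
case: (b_anti img) => [[dimUW small] | [Ufull _]].
  by move: card_W; rewrite (card_addr_closed (W0 i) (WD (i:=i))) -dimUW ltn_exp2l //; lia.
by apply/setP => c; rewrite -(span_addr_closed (U0 i) (UD (i:=i))) !inE Ufull memvf.
Qed.

Lemma embed_in_block i u c : u \in X -> row i u != 0 -> embed i c \in X.
Proof.
move=> Xu ui0; have [a Ua a0] := U_neq0 Xu ui0.
by have := U_full Ua a0; move/setP/(_ c); rewrite !inE.
Qed.

Let I := [set i | [exists u in X, row i u != 0]].

Lemma block_wall : X = wall m I.
Proof.
apply/setP => x; rewrite inE; apply/idP/forallP => [Xx i | wx].
  by apply/implyP; rewrite inE negb_exists_in => /forall_inP/(_ x Xx); rewrite negbK.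
rewrite -(sum_embed_row x); apply: (big_ind (fun y => y \in X)) => // i _.
have [|iI] := boolP (i \in I).
  by rewrite inE => /exists_inP[u Xu]; apply: embed_in_block.
by move/implyP: (wx i) => /(_ iI)/eqP ->; rewrite embed0.
Qed.

Lemma wall_lam_stable x : x \in wall m I -> lam x \in wall m I.
Proof.
rewrite -block_wall -(permKV gam x) => Xx; apply: block_stable.
by rewrite block_wall -(bricklayer_wall gam_bricks gam0) -block_wall.
Qed.

Lemma block_trivial : X = [set 0] \/ X = setT.
Proof.
have [I0 | I_neq0] := eqVneq I set0.
  left; apply/eqP; rewrite eqEsubset sub1set X0 andbT; apply/subsetP => x Xx.
  rewrite inE; apply/eqP/row_matrixP => i; rewrite row0; apply/eqP.
  have : i \notin I by rewrite I0 inE.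
  by rewrite inE negb_exists_in => /forall_inP/(_ x Xx)/negPn.
have [IT | I_neqT] := eqVneq I setT.
  by right; apply/setP => x; rewrite block_wall IT !inE; apply/forallP => i; rewrite inE.
by case: (lam_mixing.2 I I_neq0 I_neqT); apply: wall_lam_stable.
Qed.

End BlockOfRound.

Section TranslationBlocks.

Variables (n m : nat) (G : {group {perm state n m}}) (Q : {set {set state n m}}).
Hypothesis G_transl : forall v, transl v \in G.
Hypothesis Q_partition : partition Q [set: state n m].
Hypothesis Q_acts : [acts G, on Q | 'P^*].

Let Q_triv : trivIset Q. Proof. by case/and3P: Q_partition. Qed.
Let Q_cover x : x \in cover Q.
Proof. by case/and3P: Q_partition => /eqP-> _ _; rewrite inE. Qed.

Lemma pblock_perm g x : g \in G -> pblock Q (g x) = g @: pblock Q x.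
Proof.
move=> Gg; apply: def_pblock Q_triv _ (imset_f _ _); last by rewrite mem_pblock.
by rewrite -[g @: _]/(('P^*)%act _ g) (actsP Q_acts) // pblock_mem.
Qed.

Lemma pblock_transl x : pblock Q x = transl x @: pblock Q 0.
Proof. by rewrite -[in LHS](add0r x) -transl_apply pblock_perm ?G_transl. Qed.

Lemma mem_pblock_add x y : (y \in pblock Q x) = (y + x \in pblock Q 0).
Proof.
rewrite pblock_transl; apply/imsetP/idP => [[z X0z ->] | X0yx].
  by rewrite transl_apply addmxK_F2.
by exists (y + x); rewrite // transl_apply addmxK_F2.
Qed.

Lemma mem0_pblock0 : 0 \in pblock Q 0.
Proof. by rewrite mem_pblock. Qed.

Lemma pblock0D : {in pblock Q 0 &, forall x y, x + y \in pblock Q 0}.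
Proof.
move=> x y X0x X0y.
by rewrite -mem_pblock_add (def_pblock Q_triv _ X0y) // pblock_mem.
Qed.

Lemma pblock0_cosets g x y : g \in G -> x + y \in pblock Q 0 -> g x + g y \in pblock Q 0.
Proof. by move=> Gg; rewrite -!mem_pblock_add pblock_perm //; apply: imset_f. Qed.

Lemma card_pblock0 : (#|Q| * #|pblock Q 0%R|)%N = #|[set: state n m]|.
Proof.
rewrite (card_partition Q_partition) -sum_nat_const; apply: eq_bigr => A QA.
have /set0Pn[y Ay] : A != set0.
  by apply: contraTneq QA => ->; case/and3P: Q_partition.
by rewrite -(def_pblock Q_triv QA Ay) (pblock_transl y) card_imset //; apply: perm_inj.
Qed.

End TranslationBlocks.

Lemma primitive_of_translations n m (G : {group {perm state n m}}) :
  (forall v, transl v \in G) ->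
  (forall X : {set state n m}, 0 \in X -> {in X &, forall x y, x + y \in X} ->
     (forall g x y, g \in G -> x + y \in X -> g x + g y \in X) ->
     X = [set 0] \/ X = setT) ->
  [primitive G, on [set: state n m] | 'P].
Proof.
move=> G_transl X_trivial; apply/andP; split.
  apply/imsetP; exists 0 => //; apply/setP => y; rewrite inE; apply/esym/orbitP.
  by exists (transl y) => //=; rewrite apermE transl_apply add0r.
rewrite negb_exists; apply/forallP => Q; apply/negP.
case/and3P => Q_partition Q_acts /andP[Q_gt1 Q_lt].
have V_gt0 : (0 < #|[set: state n m]|)%N by apply/card_gt0P; exists 0.
have := card_pblock0 G_transl Q_partition Q_acts.
have [-> | ->] := X_trivial _ (mem0_pblock0 Q_partition)
  (pblock0D G_transl Q_partition Q_acts) (pblock0_cosets G_transl Q_partition Q_acts).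
  by rewrite cards1; lia.
by nia.
Qed.

Lemma primitive_of_round n m r (gam lam : {perm state n m}) b (G : {group {perm state n m}}) :
  is_bricklayer gam b -> gam 0 = 0 -> proper_mixing lam -> (0 < r < m)%N ->
  (forall i, diff_uniform (b i) (2 ^ r)) ->
  (forall i, strongly_anti_invariant (b i) (r - 1)) ->
  (forall v, transl v \in G) -> (gam * lam)%g \in G ->
  [primitive G, on [set: state n m] | 'P].
Proof.
move=> gam_bricks gam0 lam_mixing r_bounds b_uniform b_anti G_transl gl_in.
apply: primitive_of_translations G_transl _ => X X0 XD X_cosets.
have := block_trivial gam_bricks gam0 lam_mixing r_bounds b_uniform b_anti X0 XD.
apply=> x y xy; rewrite -!(permM gam lam); exact: X_cosets gl_in xy.
Qed.

Theorem theorem3p1 (m n : nat) (K : finType) (l : nat)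
  (gam lam : 'I_l -> {perm 'M['F_2]_(n, m)})
  (bricks : 'I_l -> 'I_n -> {perm 'rV['F_2]_m})
  (phi : K -> 'I_l -> 'M['F_2]_(n, m)) (r : nat) (h : 'I_l) :
  (1 < m)%N -> (1 < n)%N ->
  (forall j, is_bricklayer (gam j) (bricks j)) ->
  (forall j, gam j 0%R = 0%R) ->
  (forall j, is_GL (lam j)) ->
  proper_round lam phi h ->
  (1 < r < m)%N ->
  (forall i, diff_uniform (bricks h i) (2 ^ r)) ->
  (forall i, strongly_anti_invariant (bricks h i) (r - 1)) ->
  [primitive Gamma_h gam lam phi h, on [set: 'M['F_2]_(n, m)] | 'P] /\
  [primitive Gamma_inf gam lam phi, on [set: 'M['F_2]_(n, m)] | 'P].
Proof.
move=> _ _ gam_bricks gam0 _ [lam_mixing phi_onto] r_bounds b_uniform b_anti.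
have r_pos : (0 < r < m)%N by case/andP: r_bounds => /ltnW -> ->.
have round_in k : round_fun gam lam phi k h \in Gamma_h gam lam phi h.
  by apply/mem_gen/imset_f.
have [k0 phi0] := phi_onto 0.
have gl_in : (gam h * lam h)%g \in Gamma_h gam lam phi h.
  by have := round_in k0; rewrite /round_fun phi0 transl0 mulg1.
have transl_in v : transl v \in Gamma_h gam lam phi h.
  have [k phik] := phi_onto v.
  by have := groupM (groupVr gl_in) (round_in k); rewrite /round_fun phik mulKg.
have sub_inf : Gamma_h gam lam phi h \subset Gamma_inf gam lam phi.
  by apply/subsetP => g Gg; apply/mem_gen/bigcupP; exists h.
have primitive_of :=
  primitive_of_round (gam_bricks h) (gam0 h) lam_mixing r_pos b_uniform b_anti.
split; first exact: primitive_of.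
by apply: primitive_of => [v|]; apply: (subsetP sub_inf).
Qed.
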